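(* Let $f:\{0,\dots,r-1\}^n\to\mathbb{R}$ be an $r$-valued fitness function with a neutral position $i\in\{1,\dots,n\}$. Consider the $r$-cGA optimizing $f$ with population size $K$. Then for every $j\in\{0,\dots,r-1\}$ and $T\in\mathbb{N}$, \[\Pr\left[\max_{t\in\{0,\dots,T\}}\left|p^{(t)}_{i,j}-p^{(0)}_{i,j}\right|\geq \frac{1}{2r}\right]\leq 2\exp\left(-\frac{K^2}{8Tr^2}\right).\]
   Context: Let $n\geq 1$, $r\geq 2$ be integers and $K>0$. The $r$-cGA maximizing $f$ maintains frequencies $p^{(t)}_{i,j}$ ($i\in\{1,\dots,n\}$, $j\in\{0,\dots,r-1\}$), initialized to $p^{(0)}_{i,j}=1/r$. In iteration $t$ it samples $x,y\in\{0,\dots,r-1\}^n$ independently, each position $i$ independently with $\Pr[x_i=j]=p^{(t)}_{i,j}$; if $f(x)<f(y)$ it swaps $x$ and $y$; then it sets $p^{(t+1)}_{i,j}=p^{(t)}_{i,j}+\frac1K(\mathbf{1}[x_i=j]-\mathbf{1}[y_i=j])$ for all $i,j$, with no margins restricting frequencies. A position $i$ is neutral for $f$ if for all $x,x'$ agreeing on all positions other than $i$ we have $f(x)=f(x')$. *)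

From HB Require Import structures.
From mathcomp Require Import all_boot all_order all_algebra.
From mathcomp Require Import reals.
From mathcomp Require Import sequences.
From mathcomp.analysis Require Import exp.
Set Implicit Arguments. Unset Strict Implicit. Unset Printing Implicit Defensive.
Import Order.TTheory GRing.Theory Num.Theory.
Local Open Scope ring_scope.

Definition config (n r : nat) := {ffun 'I_n -> 'I_r}.

Definition freqs (R : realType) (n r : nat) := 'I_n -> 'I_r -> R.

Section RcGA.
Variables (R : realType) (n r : nat) (K : R) (f : config n r -> R).

Definition p_init : freqs R n r := fun _ _ => (r%:R)^-1.

Definition sample_prob (p : freqs R n r) (x : config n r) : R :=
  \prod_(k < n) p k (x k).

Definition cga_update (p : freqs R n r) (xy : config n r * config n r)
  : freqs R n r :=
  let: (x, y) := if f xy.1 < f xy.2 then (xy.2, xy.1) else xy in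
  fun k j => p k j + K^-1 * ((x k == j)%:R - (y k == j)%:R).

Definition cga_traj (s : seq (config n r * config n r)) (t : nat)
  : freqs R n r := foldl cga_update p_init (take t s).

Definition history_prob (T : nat) (s : T.-tuple (config n r * config n r))
  : R :=
  \prod_(t < T) (sample_prob (cga_traj s t) (tnth s t).1 *
                 sample_prob (cga_traj s t) (tnth s t).2).

Definition prob_max_dev (T : nat) (i : 'I_n) (j : 'I_r) : R :=
  \sum_(s : T.-tuple (config n r * config n r))
     history_prob s *
     (((2 * r%:R)^-1 <=
        \big[Num.max/0]_(t < T.+1)
           `|cga_traj s t i j - cga_traj s 0 i j|)%R%:R).

End RcGA.

Definition neutral (R : realType) (n r : nat) (f : config n r -> R)
  (i : 'I_n) : Prop :=
  forall x x' : config n r, (forall k, k != i -> x k = x' k) -> f x = f x'.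

(* Since position i is neutral, exchanging the i-th entries of the two samples
   does not change which of them is selected.  Hence the i-th entries of winner
   and loser are two independent draws from p_i, and p_{i,j} alone performs a
   random walk that moves by +1/K and by -1/K, each with probability u (1 - u)
   where u is its current value; the other positions marginalize out.
   Write c = 1/r and δ = 1/(2r).  While |u - c| < δ the walk stays in [0, 1],
   where  exp (±λ (u - c) - λ δ + t λ^2 / (2 K^2))  is a supermartingale
   because cosh y <= exp (y^2 / 2).  The sum of the two is at least 1 outside
   the band, so the walk leaves the band within T steps with probability at
   most  2 exp (T λ^2 / (2 K^2) - λ δ),  and  λ = δ K^2 / T  gives the bound. *)

From HB Require Import structures.
From mathcomp Require Import all_boot all_order all_algebra.
From mathcomp Require Import reals topology normedtype.
From mathcomp Require Import sequences exp.
From mathcomp Require Import ring lra zify.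
Set Implicit Arguments. Unset Strict Implicit. Unset Printing Implicit Defensive.
Import Order.TTheory GRing.Theory Num.Theory.
Import numFieldNormedType.Exports.
Local Open Scope classical_set_scope.
Local Open Scope ring_scope.

Lemma leq_exp2_fact_double k : (2 ^ k * k`! <= (k.*2)`!)%N.
Proof.
elim: k => // k IH; rewrite doubleS !factS expnS.
rewrite (_ : 2 * 2 ^ k * (k.+1 * k`!) = (k.+1).*2 * (2 ^ k * k`!))%N.
  by rewrite [leqRHS]mulnA leq_mul // doubleS; lia.
by rewrite -!muln2; ring.
Qed.

Lemma big_tuple_cons (T : finType) (V : nmodType) m (F : m.+1.-tuple T -> V) :
  \sum_(s : m.+1.-tuple T) F s =
  \sum_(a : T) \sum_(s : m.-tuple T) F [tuple of a :: s].
Proof.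
rewrite (pair_bigA _ (fun a (s : m.-tuple T) => F [tuple of a :: s])) /=.
rewrite (reindex (fun q : T * m.-tuple T => [tuple of q.1 :: q.2])) //=.
exists (fun t : m.+1.-tuple T => (thead t, [tuple of behead t])).
  by move=> [a s] _ /=; rewrite theadE; congr (_, _); apply: val_inj.
by move=> t _; rewrite [RHS]tuple_eta.
Qed.

Lemma big_tuple0 (T : finType) (V : nmodType) (F : 0.-tuple T -> V) :
  \sum_(s : 0.-tuple T) F s = F [tuple].
Proof.
by rewrite (big_pred1 [tuple]) // => s /=; apply/esym/eqP; exact: tuple0.
Qed.

Lemma sumr_eq_split (R : pzRingType) (I : finType) (j : I) (q : I -> R)
    (G : bool -> R) :
  \sum_(b : I) q b = 1 ->
  \sum_(b : I) q b * G (b == j) = q j * G true + (1 - q j) * G false.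
Proof.
move=> q_sum1; rewrite (bigD1 j) //= eqxx; congr (_ + _).
have -> : 1 - q j = \sum_(b | b != j) q b.
  by rewrite -q_sum1 (bigD1 j) //= addrC addrK.
by rewrite big_distrl; apply: eq_bigr => b /negbTE ->.
Qed.

Section CoshBound.
Variable R : realType.
Implicit Types y : R.

Lemma exp_coeffN y k : exp_coeff (- y) k = (-1) ^+ k * exp_coeff y k.
Proof. by rewrite /exp_coeff /= mulrA -exprNn. Qed.

Lemma exp_coeffDN_ge0 y k : 0 <= exp_coeff y k + exp_coeff (- y) k.
Proof.
rewrite exp_coeffN -signr_odd.
case: (boolP (odd k)) => [_|/negPf k_even]; first by rewrite mulN1r subrr.
rewrite mul1r -mulr2n mulrn_wge0 // /exp_coeff /= divr_ge0 //.
by rewrite exprn_even_ge0 ?k_even.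
Qed.

Lemma exp_coeff_double_le y m : exp_coeff y m.*2 <= exp_coeff (y ^+ 2 / 2) m.
Proof.
have y2m_ge0 : 0 <= y ^+ m.*2 by rewrite -mul2n exprM exprn_ge0 ?sqr_ge0.
rewrite /exp_coeff /= expr_div_n -exprM mul2n -mulrA ler_wpM2l //.
rewrite -invfM lef_pV2 ?posrE ?mulr_gt0 ?exprn_gt0 ?ltr0n ?fact_gt0 //.
by rewrite -natrX -natrM ler_nat leq_exp2_fact_double.
Qed.

Lemma series_exp_coeffDN_le y N :
  series (exp_coeff y) N + series (exp_coeff (- y)) N <=
  2 * series (exp_coeff (y ^+ 2 / 2)) N.
Proof.
rewrite /series /= -big_split /=.
set a := fun k => exp_coeff y k + exp_coeff (- y) k.
have a_double M :
    \sum_(0 <= k < M.*2) a k <= 2 * \sum_(0 <= m < M) exp_coeff (y ^+ 2 / 2) m.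
  elim: M => [|M IH]; first by rewrite !big_geq ?mulr0.
  rewrite doubleS !big_nat_recr //= mulrDr -addrA lerD //.
  rewrite /a !exp_coeffN -[(-1) ^+ M.*2]signr_odd -[(-1) ^+ M.*2.+1]signr_odd.
  rewrite /= odd_double expr0 expr1.
  rewrite mul1r mulN1r subrr addr0 -mulr2n mulr_natl ler_pMn2r //.
  exact: exp_coeff_double_le.
apply: le_trans (a_double N).
rewrite [leRHS](@big_cat_nat _ _ _ N) //=; last by rewrite -addnn leq_addr.
by rewrite lerDl sumr_ge0 // => k _; exact: exp_coeffDN_ge0.
Qed.

Lemma expRDN_le (y : R) : expR y + expR (- y) <= 2 * expR (y ^+ 2 / 2).
Proof.
have expR_cvg x : series (exp_coeff x) @ \oo --> expR x.
  exact: is_cvg_series_exp_coeff.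
apply: (@ler_cvg_to _ \oo _ _
  (fun N => series (exp_coeff y) N + series (exp_coeff (- y)) N)
  (fun N => 2 * series (exp_coeff (y ^+ 2 / 2)) N)).
- by apply: cvgD; exact: expR_cvg.
- by apply: cvgMr; exact: expR_cvg.
- exact: nearW (series_exp_coeffDN_le y).
Qed.
End CoshBound.

Section RandomWalk.
Variables (R : realType) (K c δ : R).

Definition out_of_band (u : R) : bool := δ <= `|u - c|.

Definition walk_mean (g : R -> R) (u : R) : R :=
  (1 - 2 * (u * (1 - u))) * g u + u * (1 - u) * (g (u + K^-1) + g (u - K^-1)).

Fixpoint exit_prob (m : nat) (u : R) : R :=
  if out_of_band u then 1 else
  if m is m'.+1 then walk_mean (exit_prob m') u else 0.

Definition exit_bound (lam : R) (m : nat) (u : R) : R :=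
  expR (m%:R * (lam / K) ^+ 2 / 2 - lam * δ) *
  (expR (lam * (u - c)) + expR (- lam * (u - c))).

Lemma walk_mean_le g h u : 0 <= u <= 1 -> (forall v, g v <= h v) ->
  walk_mean g u <= walk_mean h u.
Proof.
case/andP=> u_ge0 u_le1 gh; have w_ge0 : 0 <= u * (1 - u) by nra.
rewrite lerD ?ler_wpM2l ?lerD ?gh //; nra.
Qed.

Lemma walk_mean_expR mu u : 0 <= u <= 1 ->
  walk_mean (fun v => expR (mu * (v - c))) u <=
  expR ((mu / K) ^+ 2 / 2) * expR (mu * (u - c)).
Proof.
case/andP=> u_ge0 u_le1.
have shift s : expR (mu * (u + s - c)) = expR (mu * (u - c)) * expR (mu * s).
  by rewrite -expRD; congr expR; ring.
rewrite /walk_mean !shift mulrN.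
have cosh_le := expRDN_le (mu / K).
have Q_ge1 : 1 <= expR ((mu / K) ^+ 2 / 2).
  by rewrite leNgt expR_lt1 -leNgt divr_ge0 ?sqr_ge0.
have w_ge0 : 0 <= u * (1 - u) by nra.
have w_le : u * (1 - u) <= 1 / 2 by nra.
set E := expR (mu * (u - c)); set w := u * (1 - u) in w_ge0 w_le *.
set Q := expR ((mu / K) ^+ 2 / 2) in cosh_le Q_ge1 *.
rewrite (_ : _ + _ = E * (1 - 2 * w + w * (expR (mu / K) + expR (- (mu / K))))).
  by rewrite [leRHS]mulrC ler_wpM2l ?expR_ge0 //; nra.
by rewrite /E; ring.
Qed.

Lemma exit_bound_ge0 lam m u : 0 <= exit_bound lam m u.
Proof. by rewrite mulr_ge0 ?addr_ge0 ?expR_ge0. Qed.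

Lemma exit_bound_ge1 lam m u : 0 <= lam -> out_of_band u ->
  1 <= exit_bound lam m u.
Proof.
move=> lam_ge0 u_out.
have far : expR (lam * δ) <= expR (lam * (u - c)) + expR (- lam * (u - c)).
  have := expR_ge0 (lam * (u - c)); have := expR_ge0 (- lam * (u - c)).
  have [uc_ge0|uc_lt0] := leP 0 (u - c).
  - suff : expR (lam * δ) <= expR (lam * (u - c)) by lra.
    by rewrite ler_expR ler_wpM2l // -(ger0_norm uc_ge0).
  - suff : expR (lam * δ) <= expR (- lam * (u - c)) by lra.
    by rewrite ler_expR mulNr -mulrN ler_wpM2l // -(ltr0_norm uc_lt0).
apply: le_trans (ler_wpM2l (expR_ge0 _) far); rewrite -expRD subrK.
by rewrite leNgt expR_lt1 -leNgt divr_ge0 // mulr_ge0 // sqr_ge0.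
Qed.

Lemma walk_mean_exit_bound lam m u : 0 <= u <= 1 ->
  walk_mean (exit_bound lam m) u <= exit_bound lam m.+1 u.
Proof.
move=> u01; set C := expR (m%:R * (lam / K) ^+ 2 / 2 - lam * δ).
have -> : walk_mean (exit_bound lam m) u =
    C * (walk_mean (fun v => expR (lam * (v - c))) u +
         walk_mean (fun v => expR (- lam * (v - c))) u).
  by rewrite /walk_mean /exit_bound -/C; ring.
have -> : exit_bound lam m.+1 u =
    C * (expR ((lam / K) ^+ 2 / 2) * expR (lam * (u - c)) +
         expR ((- lam / K) ^+ 2 / 2) * expR (- lam * (u - c))).
  rewrite /exit_bound -/C !mulNr sqrrN -mulrDr mulrA /C -expRD -natr1.
  by congr (expR _ * _); ring.
by rewrite ler_wpM2l ?expR_ge0 // lerD // walk_mean_expR.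
Qed.

Lemma exit_prob_le lam m u : 0 <= c - δ -> c + δ <= 1 -> 0 <= lam ->
  exit_prob m u <= exit_bound lam m u.
Proof.
move=> band_ge0 band_le1 lam_ge0; elim: m u => [|m IH] u /=.
  by case: ifP => [|_]; [exact: exit_bound_ge1 | exact: exit_bound_ge0].
case: ifP => [|/negbT]; first exact: exit_bound_ge1.
rewrite /out_of_band -ltNge ltr_norml => /andP[lo hi].
have u01 : 0 <= u <= 1 by apply/andP; split; lra.
exact: le_trans (walk_mean_le u01 IH) (walk_mean_exit_bound _ _ u01).
Qed.

Lemma exit_bound_center m :
  exit_bound (δ * K ^+ 2 / m%:R) m c =
  2 * expR (- ((δ * K) ^+ 2 / (2 * m%:R))).
Proof.
rewrite /exit_bound subrr !mulr0 expR0 mulrC; congr (_ * _).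
case: m => [|m]; first by rewrite !(mul0r, invr0, mulr0, oppr0, subr0).
case: (eqVneq K 0) => [->|K_neq0].
  by rewrite !(expr0n, mulr0, mul0r, oppr0, subr0).
congr expR; field.
by rewrite K_neq0 nat1r pnatr_eq0.
Qed.
End RandomWalk.

Section Reduction.
Variables (R : realType) (n r : nat) (K : R) (f : config n r -> R).
Variables (i : 'I_n) (j : 'I_r) (c δ : R).
Hypothesis f_neutral : neutral f i.

Local Notation sample := (config n r * config n r)%type.
Local Notation update := (cga_update K f).

Definition row_stochastic (p : freqs R n r) : Prop :=
  forall k, \sum_(b < r) p k b = 1.

Definition pair_prob (p : freqs R n r) (a : sample) : R :=
  sample_prob p a.1 * sample_prob p a.2.

Fixpoint history_weight (p : freqs R n r) (s : seq sample) : R :=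
  if s is a :: s' then pair_prob p a * history_weight (update p a) s' else 1.

Fixpoint exits_band (p : freqs R n r) (s : seq sample) : bool :=
  out_of_band c δ (p i j) ||
  (if s is a :: s' then exits_band (update p a) s' else false).

Definition exit_mass (m : nat) (p : freqs R n r) : R :=
  \sum_(s : m.-tuple sample) history_weight p s * (exits_band p s)%:R.

Lemma row_stochastic_init : (0 < r)%N -> row_stochastic (@p_init R n r).
Proof.
move=> r_gt0 k; rewrite /p_init sumr_const card_ord -[LHS]mulr_natr mulVf //.
by rewrite pnatr_eq0 -lt0n.
Qed.

Lemma row_stochastic_update p a :
  row_stochastic p -> row_stochastic (update p a).
Proof.
have sum_eq1 (v : 'I_r) : \sum_(b < r) (v == b)%:R = 1 :> R.
  rewrite (bigD1 v) //= eqxx big1 ?addr0 // => b /negbTE.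
  by rewrite eq_sym => ->.
move=> p_rs k; case: a => x y; rewrite /cga_update /=.
by case: ifP => _ /=;
  rewrite big_split /= p_rs -mulr_sumr sumrB !sum_eq1 subrr mulr0 addr0.
Qed.

Lemma sum_sample_prob_at p (h : 'I_r -> R) : row_stochastic p ->
  \sum_(x : config n r) sample_prob p x * h (x i) = \sum_(b < r) p i b * h b.
Proof.
move=> p_rs.
transitivity (\sum_(x : config n r)
   \prod_(k < n) (p k (x k) * (if k == i then h (x k) else 1))).
  apply: eq_bigr => x _; rewrite /sample_prob big_split /=; congr (_ * _).
  by rewrite (bigD1 i) //= eqxx big1 ?mulr1 // => k /negbTE ->.
rewrite -(bigA_distr_bigA (fun k b => p k b * (if k == i then h b else 1))).
rewrite (bigD1 i) //= [X in _ * X]big1 ?mulr1.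
  by apply: eq_bigr => b _; rewrite eqxx.
move=> k /negbTE k_neq_i; rewrite -[RHS](p_rs k).
by apply: eq_bigr => b _; rewrite k_neq_i mulr1.
Qed.

Lemma sum_pair_prob_at p (h : 'I_r -> 'I_r -> R) : row_stochastic p ->
  \sum_(a : sample) pair_prob p a * h (a.1 i) (a.2 i) =
  \sum_(b < r) p i b * \sum_(b' < r) p i b' * h b b'.
Proof.
move=> p_rs.
rewrite -(pair_bigA _ (fun x y => pair_prob p (x, y) * h (x i) (y i))) /=.
rewrite -(sum_sample_prob_at (fun b => \sum_(b' < r) p i b' * h b b')) //.
apply: eq_bigr => x _; rewrite -(sum_sample_prob_at (h (x i))) // mulr_sumr.
by apply: eq_bigr => y _; rewrite mulrA.
Qed.

Definition set_at (x : config n r) (v : 'I_r) : config n r :=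
  [ffun k => if k == i then v else x k].

Definition swap_at (a : sample) : sample :=
  (set_at a.1 (a.2 i), set_at a.2 (a.1 i)).

Lemma set_at_at x v : set_at x v i = v.
Proof. by rewrite ffunE eqxx. Qed.

Lemma swap_atK : involutive swap_at.
Proof.
move=> [x y]; rewrite /swap_at /= !set_at_at.
by congr (_, _); apply/ffunP => k; rewrite !ffunE; case: eqP => // ->.
Qed.

Lemma f_set_at x v : f (set_at x v) = f x.
Proof. by apply: f_neutral => k /negbTE k_neq_i; rewrite ffunE k_neq_i. Qed.

Lemma pair_prob_swap_at p a : pair_prob p (swap_at a) = pair_prob p a.
Proof.
rewrite /pair_prob /sample_prob -!big_split /=; apply: eq_bigr => k _.
by rewrite !ffunE; case: eqP => [->|]; rewrite // mulrC.
Qed.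

(* Where selection swaps x and y, exchanging their i-th entries undoes the
   swap at position i without changing the selection (by neutrality) or the
   weight. *)
Lemma sum_update_neutral p (g : R -> R) :
  \sum_(a : sample) pair_prob p a * g (update p a i j) =
  \sum_(a : sample) pair_prob p a *
      g (p i j + K^-1 * ((a.1 i == j)%:R - (a.2 i == j)%:R)).
Proof.
rewrite (bigID (fun a : sample => f a.1 < f a.2)) /=.
rewrite [RHS](bigID (fun a : sample => f a.1 < f a.2)) /=; congr (_ + _).
  rewrite [RHS](reindex_inj (can_inj swap_atK)) /=.
  apply: eq_big => -[x y] /=; first by rewrite !f_set_at.
  move=> swapped.
  by rewrite pair_prob_swap_at /cga_update /= swapped !set_at_at.
by apply: eq_bigr => -[x y] /= /negbTE kept; rewrite /cga_update /= kept.
Qed.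

Lemma sum_pair_prob_update p (g : R -> R) : row_stochastic p ->
  \sum_(a : sample) pair_prob p a * g (update p a i j) = walk_mean K g (p i j).
Proof.
move=> p_rs; rewrite sum_update_neutral; set u := p i j.
rewrite (sum_pair_prob_at
  (fun b b' => g (u + K^-1 * ((b == j)%:R - (b' == j)%:R)))) //.
under eq_bigr => b _ do rewrite
  (sumr_eq_split j (fun e => g (u + K^-1 * ((b == j)%:R - e%:R))) (p_rs i)).
rewrite (sumr_eq_split j (fun e => u * g (u + K^-1 * (e%:R - 1)) +
                          (1 - u) * g (u + K^-1 * (e%:R - 0))) (p_rs i)).
by rewrite /walk_mean -/u /= !subrr subr0 sub0r mulr0 addr0 mulr1 mulrN1; ring.
Qed.

Lemma sum_pair_prob p : row_stochastic p -> \sum_(a : sample) pair_prob p a = 1.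
Proof.
move=> p_rs.
have walk_mean1 : walk_mean K (fun=> 1) (p i j) = 1 by rewrite /walk_mean; ring.
rewrite -[RHS]walk_mean1 -sum_pair_prob_update //.
by apply: eq_bigr => a _; rewrite mulr1.
Qed.

Lemma sum_history_weight m p : row_stochastic p ->
  \sum_(s : m.-tuple sample) history_weight p s = 1.
Proof.
elim: m p => [|m IH] p p_rs; first by rewrite big_tuple0.
rewrite big_tuple_cons /= -[RHS](sum_pair_prob p_rs); apply: eq_bigr => a _.
by rewrite -mulr_sumr IH ?mulr1 //; exact: row_stochastic_update.
Qed.

Lemma exit_mass_out m p : row_stochastic p -> out_of_band c δ (p i j) ->
  exit_mass m p = 1.
Proof.
move=> p_rs p_out; rewrite -(sum_history_weight m p_rs); apply: eq_bigr => s _.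
by case: (tval s) => [|a s'] /=; rewrite p_out mulr1.
Qed.

Lemma exit_mass_S m p : ~~ out_of_band c δ (p i j) ->
  exit_mass m.+1 p = \sum_(a : sample) pair_prob p a * exit_mass m (update p a).
Proof.
move=> /negbTE p_in; rewrite /exit_mass big_tuple_cons; apply: eq_bigr => a _.
by rewrite mulr_sumr; apply: eq_bigr => s _; rewrite /= p_in mulrA.
Qed.

(* Without margins the frequencies at other positions may leave [0, 1], so
   pair_prob can be negative: the reduction has to be an exact identity. *)
Lemma exit_massE m p :
  row_stochastic p -> exit_mass m p = exit_prob K c δ m (p i j).
Proof.
elim: m p => [|m IH] p p_rs.
  by rewrite /exit_mass big_tuple0 /= mul1r orbF; case: out_of_band.
have [p_out|p_in] := boolP (out_of_band c δ (p i j)).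
  by rewrite exit_mass_out //= p_out.
rewrite exit_mass_S //= (negbTE p_in) -sum_pair_prob_update //.
by apply: eq_bigr => a _; rewrite IH //; exact: row_stochastic_update.
Qed.

Lemma history_weightE p (s : seq sample) x0 :
  \prod_(t < size s) pair_prob (foldl update p (take t s)) (nth x0 s t) =
  history_weight p s.
Proof.
elim: s p => [|a s IH] p /=; first by rewrite big_ord0.
by rewrite big_ord_recl /= IH.
Qed.

Lemma exits_band_max p (s : seq sample) : 0 < δ ->
  (δ <= \big[Num.max/0]_(t < (size s).+1)
          `|foldl update p (take t s) i j - c|) = exits_band p s.
Proof.
move=> δ_gt0; elim: s p => [|a s IH] p /=.
  by rewrite big_ord_recl big_ord0 le_max [δ <= 0]leNgt δ_gt0 !orbF.
by rewrite big_ord_recl le_max /= -IH.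
Qed.
End Reduction.

Lemma prob_max_devE (R : realType) n r (K : R) f i j T : (0 < r)%N ->
  prob_max_dev K f T i j =
  exit_mass K f i j (r%:R^-1) ((2 * r%:R)^-1) T (@p_init R n r).
Proof.
move=> r_gt0; pose x0 : config n r * config n r :=
  ([ffun=> Ordinal r_gt0], [ffun=> Ordinal r_gt0]).
apply: eq_bigr => s _; congr (_ * _).
  rewrite /history_prob -(history_weightE K f _ _ x0) size_tuple.
  by apply: eq_bigr => t _; rewrite /cga_traj !(tnth_nth x0).
rewrite -exits_band_max ?size_tuple /cga_traj ?take0 //.
by rewrite invr_gt0 mulr_gt0 // ltr0n.
Qed.

Theorem theorem2 (R : realType) (n r : nat) (K : R)
  (f : config n r -> R) (i : 'I_n) (j : 'I_r) (T : nat) :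
  (1 <= n)%N -> (2 <= r)%N -> 0 < K ->
  neutral f i ->
  prob_max_dev K f T i j <=
    2 * expR (- (K ^+ 2 / (8 * T%:R * r%:R ^+ 2))).
Proof.
move=> _ r_ge2 K_gt0 f_neutral.
have r_gt0 : (0 < r)%N by exact: ltnW.
rewrite prob_max_devE // exit_massE //; last exact: row_stochastic_init.
rewrite /p_init; set c : R := r%:R^-1; set δ : R := (2 * r%:R)^-1.
have δE : δ = c / 2 by rewrite /δ invfM mulrC.
have c_gt0 : 0 < c by rewrite invr_gt0 ltr0n.
have c_le_half : c <= 2^-1 by rewrite lef_pV2 ?posrE ?ltr0n ?ler_nat.
have band_ge0 : 0 <= c - δ by lra.
have band_le1 : c + δ <= 1 by lra.
have lam_ge0 : 0 <= δ * K ^+ 2 / T%:R.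
  by rewrite divr_ge0 ?mulr_ge0 ?sqr_ge0 //; lra.
apply: le_trans (exit_prob_le _ _ _ band_ge0 band_le1 lam_ge0) _.
rewrite exit_bound_center /δ.
suff -> : ((2 * r%:R)^-1 * K) ^+ 2 / (2 * T%:R) =
          K ^+ 2 / (8 * T%:R * r%:R ^+ 2) by [].
case: T {lam_ge0} => [|T]; first by rewrite !(mulr0, mul0r, invr0).
by field; rewrite nat1r !pnatr_eq0 -lt0n r_gt0.
Qed.
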